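(* Let $(M,\le)$ be a finite ordered monoid. If $M$ is a $T_q$ monoid for some $q>1$, or if $M$ is divided (as an ordered monoid) by one of $BA_2^+$, $U^+$, or a non-commutative group (with any stable order), then $N^1(M)=\Omega(n)$.
   Context: $M$ is a $T_q$ monoid if there exist idempotents $e,f\in M$ with $(ef)^qe=e$ and $(ef)^re\ne e$ for every positive integer $r$ not divisible by $q$. Syntactic ordered monoid of $L\subseteq\Sigma^*$: write $x\preceq_L y$ if for all $u,v$, $uyv\in L\Rightarrow uxv\in L$; $\Sigma^*/\equiv_L$ (with $x\equiv_L y$ iff $x\preceq_L y$ and $y\preceq_L x$) ordered by $[x]\le[y]$ iff $x\preceq_L y$. $BA_2^+$ is the syntactic ordered monoid of $(ab)^*\subseteq\{a,b\}^*$; $U^+$ is the syntactic ordered monoid of the complement in $\{a,b\}^*$ of $(a\cup b)^*aa(a\cup b)^*$. An ordered monoid $N$ divides $M$ if there is a surjective order-preserving monoid morphism from a submonoid of $M$ (restricted order) onto $N$. A finite ordered monoid has a partial order with $x\le y\Rightarrow zx\le zy,\ xz\le yz$. $N^1(f)$ is the non-deterministic communication complexity of $f:X\times Y\to\{0,1\}$; equivalently, up to an additive constant 2, $\log_2$ of the minimum number of rectangles $S\times T$ on which $f\equiv1$ covering $f^{-1}(1)$. For an order ideal $I$ ($y\in I, x\le y\Rightarrow x\in I$), $N^1(M,I)(n)$ is $N^1$ of the function where Alice receives $m_1,m_3,\dots,m_{2n-1}$, Bob receives $m_2,\dots,m_{2n}$, value $1$ iff $m_1\cdots m_{2n}\in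 I$; $N^1(M)=\max_I N^1(M,I)$. *)

From HB Require Import structures.
From mathcomp Require Import all_boot.
Set Implicit Arguments. Unset Strict Implicit. Unset Printing Implicit Defensive.

Record ordMonoid := OrdMonoid {
  om_car :> finType;
  om_mul : om_car -> om_car -> om_car;
  om_one : om_car;
  om_le : rel om_car;
  om_mulA : associative om_mul;
  om_mul1 : left_id om_one om_mul;
  om_mulr1 : right_id om_one om_mul;
  om_le_refl : reflexive om_le;
  om_le_anti : antisymmetric om_le;
  om_le_trans : transitive om_le;
  om_le_mull : forall z x y, om_le x y -> om_le (om_mul z x) (om_mul z y);
  om_le_mulr : forall z x y, om_le x y -> om_le (om_mul x z) (om_mul y z)
}.

Arguments om_mul {_}. Arguments om_one {_}. Arguments om_le {_}.

Definition mpow (M : ordMonoid) (x : M) (n : nat) : M := iter n (om_mul x) om_one.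

Definition idem (M : ordMonoid) (x : M) := om_mul x x = x.

Definition Tq (M : ordMonoid) (q : nat) : Prop :=
  exists e f : M, idem e /\ idem f /\
    om_mul (mpow (om_mul e f) q) e = e /\
    forall r, 0 < r -> ~~ (q %| r) -> om_mul (mpow (om_mul e f) r) e <> e.

Definition divides (N M : ordMonoid) : Prop :=
  exists (S : {set M}) (phi : M -> N),
    [/\ om_one \in S /\
        (forall x y, x \in S -> y \in S -> om_mul x y \in S),
        phi om_one = om_one,
        (forall x y, x \in S -> y \in S -> phi (om_mul x y) = om_mul (phi x) (phi y)),
        (forall x y, x \in S -> y \in S -> om_le x y -> om_le (phi x) (phi y))
      & (forall z : N, exists2 x, x \in S & phi x = z)].

Definition is_group (N : ordMonoid) : Prop :=
  forall x : N, exists y : N, om_mul x y = om_one /\ om_mul y x = om_one.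

Definition noncomm (N : ordMonoid) : Prop :=
  exists x y : N, om_mul x y <> om_mul y x.

(* Words over {a,b} are seq bool, with a = true, b = false. *)
Definition synle (L : seq bool -> bool) (x y : seq bool) : Prop :=
  forall u v, L (u ++ y ++ v) -> L (u ++ x ++ v).
Definition syneq (L : seq bool -> bool) (x y : seq bool) : Prop :=
  synle L x y /\ synle L y x.

(* The syntactic ordered monoid Σ*/≡_L divides M.  A map S -> Σ*/≡_L is
   represented by a choice of representatives rep : M -> seq bool. *)
Definition syn_divides (L : seq bool -> bool) (M : ordMonoid) : Prop :=
  exists (S : {set M}) (rep : M -> seq bool),
    [/\ om_one \in S /\
        (forall x y, x \in S -> y \in S -> om_mul x y \in S),
        syneq L (rep om_one) [::],
        (forall x y, x \in S -> y \in S -> syneq L (rep (om_mul x y)) (rep x ++ rep y)),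
        (forall x y, x \in S -> y \in S -> om_le x y -> synle L (rep x) (rep y))
      & (forall w, exists2 x, x \in S & syneq L (rep x) w)].

Fixpoint abstar (w : seq bool) : bool :=
  match w with
  | [::] => true
  | true :: false :: w' => abstar w'
  | _ => false
  end.

Definition noaa (w : seq bool) : bool := ~~ infix [:: true; true] w.

Definition BA2p_divides (M : ordMonoid) := syn_divides abstar M.
Definition Up_divides (M : ordMonoid) := syn_divides noaa M.

Definition is_one_rect (X Y : finType) (f : X -> Y -> bool) (R : {set X} * {set Y}) :=
  [forall x in R.1, forall y in R.2, f x y].

Definition is_cover (X Y : finType) (f : X -> Y -> bool) (C : {set {set X} * {set Y}}) :=
  [forall R in C, is_one_rect f R] &&
  [forall x, forall y, f x y ==> [exists R in C, (x \in R.1) && (y \in R.2)]].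

(* minimum number of 1-rectangles covering f^{-1}(1); #|X|*#|Y| is an upper
   bound (singleton rectangles), so it is a harmless default for the min *)
Definition cover_number (X Y : finType) (f : X -> Y -> bool) : nat :=
  \big[minn/(#|X| * #|Y|)]_(C | is_cover f C) #|C|.

(* N^1(f) := ceil(log2 (cover number)), (additive constants irrelevant) *)
Definition N1 (X Y : finType) (f : X -> Y -> bool) : nat := up_log 2 (cover_number f).

Definition order_ideal (M : ordMonoid) (I : {set M}) : bool :=
  [forall x, forall y, (y \in I) && om_le x y ==> (x \in I)].

(* Alice holds m1,m3,...,m_{2n-1} (= x), Bob holds m2,...,m_{2n} (= y). *)
Definition word_fun (M : ordMonoid) (I : {set M}) (n : nat)
    (x : n.-tuple M) (y : n.-tuple M) : bool :=
  \big[om_mul/om_one]_(i < n) om_mul (tnth x i) (tnth y i) \in I.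

Definition N1M (M : ordMonoid) (n : nat) : nat :=
  \max_(I : {set M} | order_ideal I) N1 (word_fun I (n:=n)).

Definition OmegaN (g : nat -> nat) : Prop :=
  exists k, 0 < k /\ exists n0, forall n, n0 <= n -> n <= k * g n.

From HB Require Import structures.
From mathcomp Require Import all_boot zify ssralg zmodp matrix mxalgebra.
Set Implicit Arguments. Unset Strict Implicit. Unset Printing Implicit Defensive.

(* The BA_2^+ and U^+ cases reduce, through the syntactic monoid,
   to an equality and a disjointness fooling set.  The T_q and group cases
   share a counting argument: on an orbit e0, h e0, h^2 e0, ... of exact
   period q, two points are comparable only if equal, so a gadget moving
   along the orbit by c - (s and t) steps modulo q lets an order ideal test
   whether a prime p dividing q divides |a /\ b|.  The idempotents of a T_q
   pair e, f give such a gadget on the orbit of e under ef; a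
   non-commutative group gives one on the powers of a non-trivial
   commutator, and the bound transfers to M by division. *)

Local Notation "x ** y" := (om_mul x y) (at level 40, left associativity).

(* [minn] is associative and commutative; registering it lets the bigop
   lemmas for commutative semigroups (such as [bigD1]) apply to the minimum
   that defines [cover_number]. *)
HB.instance Definition _ := SemiGroup.isComLaw.Build nat minn minnA minnC.

Section Covers.

Variables (X Y : finType) (f : X -> Y -> bool).

Lemma cover_number_le (C : {set {set X} * {set Y}}) :
  is_cover f C -> cover_number f <= #|C|.
Proof. by move=> covC; rewrite /cover_number (bigD1 C) //= geq_minl. Qed.

Lemma singleton_cover :
  is_cover f ((fun xy : X * Y => ([set xy.1], [set xy.2])) @: [set xy | f xy.1 xy.2]).
Proof.
apply/andP; split.
  apply/forallP => R; apply/implyP => /imsetP [[x y]]; rewrite inE /= => fxy ->.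
  by apply/forallP => x'; apply/implyP; rewrite inE => /eqP ->;
     apply/forallP => y'; apply/implyP; rewrite inE => /eqP ->.
apply/forallP => x; apply/forallP => y; apply/implyP => fxy.
apply/existsP; exists ([set x], [set y]); rewrite /= !in_set1 !eqxx !andbT.
by apply/imsetP; exists (x, y); rewrite // inE.
Qed.

(* The minimum defining [cover_number] is attained by an actual cover
   (the default value is never smaller than the singleton cover). *)
Lemma cover_number_attained :
  exists2 C : {set {set X} * {set Y}}, is_cover f C & #|C| <= cover_number f.
Proof.
rewrite /cover_number.
apply: (big_ind (fun v => exists2 C, is_cover f C & #|C| <= v))
  => [|u v [C covC Cu] [D covD Dv]|C covC].
- exists ((fun xy : X * Y => ([set xy.1], [set xy.2])) @: [set xy | f xy.1 xy.2]);
    first exact: singleton_cover.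
  by apply: (leq_trans (leq_imset_card _ _)); rewrite -card_prod max_card.
- case: (leqP u v) => [uv | /ltnW vu].
    by exists C; rewrite // (minn_idPl uv).
  by exists D; rewrite // (minn_idPr vu).
- by exists C.
Qed.

Lemma rectangle_size_lb (D E : finType) (al : D -> X) (be : E -> Y)
    (P : {set D * E}) (K : nat) :
  (forall de, de \in P -> f (al de.1) (be de.2)) ->
  (forall R : {set X} * {set Y}, is_one_rect f R ->
     #|[set de in P | (al de.1 \in R.1) && (be de.2 \in R.2)]| <= K) ->
  #|P| <= K * cover_number f.
Proof.
move=> P_one R_small; have [C /andP[/forallP C_rect /forallP C_cov] C_min] :=
  cover_number_attained.
pose inR (R : {set X} * {set Y}) (de : D * E) := (al de.1 \in R.1) && (be de.2 \in R.2).
have P_covered : #|P| <= \sum_(R in C) #|[set de in P | inR R de]|.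
  rewrite -sum1_card (eq_bigr (fun R => \sum_(de in P) (inR R de : nat))); last first.
    move=> R _; rewrite -sum1_card big_mkcond [RHS]big_mkcond /=.
    by apply: eq_bigr => de _; rewrite inE; case: (de \in P); case: (inR R de).
  rewrite exchange_big /=; apply: leq_sum => de deP.
  have /forallP /(_ (be de.2)) /implyP /(_ (P_one _ deP)) /existsP [R /andP[RC Rde]] :=
    C_cov (al de.1).
  by rewrite (bigD1 R) //= /inR Rde leq_addr.
apply: (leq_trans P_covered); apply: (leq_trans _ (leq_mul (leqnn K) C_min)).
rewrite mulnC -sum_nat_const; apply: leq_sum => R RC.
by apply: R_small; have := C_rect R; rewrite RC.
Qed.

Lemma fooling_set_lb (D : finType) (al : D -> X) (be : D -> Y) :
  (forall d, f (al d) (be d)) ->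
  (forall d d', f (al d) (be d') -> f (al d') (be d) -> d = d') ->
  #|D| <= cover_number f.
Proof.
move=> diag fool; pose P : {set D * D} := (fun d => (d, d)) @: setT.
have cardP : #|P| = #|D| by rewrite card_imset ?cardsT // => x y [].
rewrite -cardP -[cover_number f]mul1n.
apply: (rectangle_size_lb (al := al) (be := be)) => [de /imsetP [d _ ->] //|R /forallP R1].
apply/card_le1_eqP => [[d1 d1'] [d2 d2']].
rewrite !inE => /andP [/imsetP [x1 _ [-> ->]] /andP [a1 b1]]
               /andP [/imsetP [x2 _ [-> ->]] /andP [a2 b2]].
have := R1 (al x1); rewrite a1 => /forallP /(_ (be x2)); rewrite b2 => f12.
have := R1 (al x2); rewrite a2 => /forallP /(_ (be x1)); rewrite b1 => f21.
by rewrite (fool _ _ f12 f21).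
Qed.

End Covers.

(* If f is obtained from g by preprocessing each player's input
   separately, pulling back a cover of g gives a cover of f. *)
Lemma cover_number_reduction (X Y X' Y' : finType) (f : X -> Y -> bool)
    (g : X' -> Y' -> bool) (al : X -> X') (be : Y -> Y') :
  (forall x y, f x y = g (al x) (be y)) -> cover_number f <= cover_number g.
Proof.
move=> fg; have [C /andP[/forallP C_rect /forallP C_cov] C_min] :=
  cover_number_attained g.
pose pull (R : {set X'} * {set Y'}) := (al @^-1: R.1, be @^-1: R.2).
apply: (leq_trans _ C_min); apply: (leq_trans _ (leq_imset_card pull _)).
apply: cover_number_le; apply/andP; split.
  apply/forallP => R'; apply/implyP => /imsetP [R RC ->].
  have /implyP /(_ RC) /forallP R1 := C_rect R.
  apply/forallP => x; apply/implyP; rewrite inE => xR.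
  have /implyP /(_ xR) /forallP R2 := R1 (al x).
  by apply/forallP => y; apply/implyP; rewrite inE fg; exact: (implyP (R2 (be y))).
apply/forallP => x; apply/forallP => y; apply/implyP; rewrite fg => gxy.
have /forallP /(_ (be y)) /implyP /(_ gxy) /existsP [R /andP [RC Rxy]] := C_cov (al x).
by apply/existsP; exists (pull R); rewrite imset_f //= !inE.
Qed.


Section ModularOrthogonality.
Import GRing.Theory.
Local Open Scope ring_scope.

Variables (p m : nat).
Hypothesis p_prime : prime p.

Definition incidence_mx (A : {set {ffun 'I_m -> bool}}) : 'M['F_p]_(#|A|, m) :=
  \matrix_(i, k) (((enum_val i : {ffun 'I_m -> bool}) k : nat)%:R).

Lemma bool_natr_inj (b c : bool) : (b : nat)%:R = (c : nat)%:R :> 'F_p -> b = c.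
Proof. by case: b; case: c => //= /eqP; rewrite ?oner_eq0 // eq_sym oner_eq0. Qed.

(* A family of 0/1 vectors of F_p-rank r has at most 2^r members: a 0/1
   vector is determined by its entries on a set of r coordinates spanning
   the column space. *)
Lemma card_le_exp_rank (A : {set {ffun 'I_m -> bool}}) :
  (#|A| <= 2 ^ \rank (incidence_mx A))%N.
Proof.
set Mt := (incidence_mx A)^T; set cols := maxrankfun Mt.
have col_comb k : exists x : 'rV['F_p]_(\rank Mt), row k Mt = x *m rowsub cols Mt.
  have : (row k Mt <= rowsub cols Mt)%MS by rewrite (eq_maxrowsub Mt) row_sub.
  by case/submxP => x ->; exists x.
pose restr (a : {ffun 'I_m -> bool}) : {ffun 'I_(\rank Mt) -> bool} := [ffun j => a (cols j)].
have restr_inj : {in A &, injective restr}.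
  move=> a a' aA a'A /ffunP eq_a; apply/ffunP => k; have [x def_k] := col_comb k.
  have entry i : Mt k i = \sum_j x ord0 j * Mt (cols j) i.
    by have := congr1 (fun N : 'M_(1, _) => N ord0 i) def_k; rewrite !mxE => ->;
       apply: eq_bigr => j _; rewrite mxE.
  have [i ai] : exists i : 'I_#|A|, enum_val i = a.
    by exists (enum_rank_in aA a); rewrite enum_rankK_in.
  have [i' ai'] : exists i : 'I_#|A|, enum_val i = a'.
    by exists (enum_rank_in a'A a'); rewrite enum_rankK_in.
  apply: bool_natr_inj; have := entry i; have := entry i'; rewrite !mxE ai ai' => -> ->.
  by apply: eq_bigr => j _; rewrite !mxE ai ai'; have := eq_a j; rewrite !ffunE => ->.
apply: (@leq_trans #|restr @: A|); first by rewrite (card_in_imset restr_inj).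
by apply: (leq_trans (max_card _)); rewrite card_ffun card_bool card_ord mxrank_tr.
Qed.

(* Two families of subsets of an m-set all of whose cross intersections have
   size divisible by p satisfy #|A| * #|B| <= 2^m: their incidence matrices
   are orthogonal over F_p, so their ranks sum to at most m. *)
Lemma orthogonal_families_bound (A B : {set {ffun 'I_m -> bool}}) :
  (forall a b, a \in A -> b \in B -> p %| \sum_(k < m) (a k && b k)) ->
  (#|A| * #|B| <= 2 ^ m)%N.
Proof.
move=> orthAB; have orth_mx : incidence_mx A *m (incidence_mx B)^T = 0.
  apply/matrixP => i i'; rewrite !mxE.
  have /dvdnP [c def_c] := orthAB _ _ (enum_valP i) (enum_valP i').
  transitivity ((\sum_(k < m) (enum_val i k && enum_val i' k) : nat)%:R : 'F_p).
    rewrite natr_sum; apply: eq_bigr => k _; rewrite !mxE.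
    by case: (enum_val i k); case: (enum_val i' k); rewrite /= ?mul1r ?mul0r ?mulr0.
  by rewrite def_c natrM (pchar_Fp_0 p_prime) mulr0.
have := mulmx0_rank_max orth_mx; rewrite mxrank_tr => rank_sum.
apply: (leq_trans (leq_mul (card_le_exp_rank A) (card_le_exp_rank B))).
by rewrite -expnD leq_exp2l.
Qed.

End ModularOrthogonality.

(* Lower bound for functions that accept every disjoint pair of subsets of
   an m-set and accept only pairs whose intersection size is divisible by a
   prime p: the 3^m disjoint pairs meet each 1-rectangle A x B in at most
   #|A| * #|B| <= 2^m points. *)
Lemma disjointness_mod_lb (X Y : finType) (m p : nat) (f : X -> Y -> bool)
    (al : {ffun 'I_m -> bool} -> X) (be : {ffun 'I_m -> bool} -> Y) :
  prime p ->
  (forall a b : {ffun 'I_m -> bool}, [forall k, ~~ (a k && b k)] -> f (al a) (be b)) ->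
  (forall a b : {ffun 'I_m -> bool}, f (al a) (be b) -> p %| \sum_(k < m) (a k && b k)) ->
  3 ^ m <= 2 ^ m * cover_number f.
Proof.
move=> p_prime disj_acc acc_mod.
pose pair_of (h : {ffun 'I_m -> 'I_3}) : {ffun 'I_m -> bool} * {ffun 'I_m -> bool} :=
  ([ffun k => h k == 1 :> nat], [ffun k => h k == 2 :> nat]).
pose P := pair_of @: setT.
have cardP : #|P| = 3 ^ m.
  rewrite card_imset ?cardsT ?card_ffun ?card_ord // => h h' [/ffunP e1 /ffunP e2].
  apply/ffunP => k; have := e1 k; have := e2 k; rewrite !ffunE.
  by case: (h k) => [[|[|[|?]]] ?] //; case: (h' k) => [[|[|[|?]]] ?] //= _ _; apply: val_inj.
rewrite -cardP; apply: (rectangle_size_lb (al := al) (be := be)).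
  move=> _ /imsetP [h _ ->]; apply: disj_acc; apply/forallP => k; rewrite !ffunE.
  by case: (h k) => [[|[|[|?]]] ?].
move=> R /forallP R1; pose A := [set a | al a \in R.1]; pose B := [set b | be b \in R.2].
apply: (@leq_trans #|setX A B|).
  by apply: subset_leq_card; apply/subsetP => [[a b]]; rewrite !inE => /andP [_ ->].
rewrite cardsX; apply: (orthogonal_families_bound p_prime) => a b; rewrite !inE => aA bB.
by apply: acc_mod; have := R1 (al a); rewrite aA => /forallP /(_ (be b)); rewrite bB.
Qed.

Lemma N1M_ge (M : ordMonoid) (n j : nat) (I : {set M}) :
  order_ideal I -> 2 ^ j <= cover_number (@word_fun M I n) -> j <= N1M M n.
Proof.
move=> idealI cover_big; apply: leq_trans (leq_bigmax_cond _ idealI).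
by rewrite /N1 -(up_expnK j (isT : 1 < 2)) leq_up_log.
Qed.

Definition wordval (M : ordMonoid) (xs ys : seq M) : M :=
  foldr (fun xy acc => (xy.1 ** xy.2) ** acc) om_one (zip xs ys).

Lemma wordval_cons (M : ordMonoid) (x y : M) xs ys :
  wordval (x :: xs) (y :: ys) = (x ** y) ** wordval xs ys.
Proof. by []. Qed.

Lemma wordval_cat (M : ordMonoid) (xs1 ys1 xs2 ys2 : seq M) : size xs1 = size ys1 ->
  wordval (xs1 ++ xs2) (ys1 ++ ys2) = wordval xs1 ys1 ** wordval xs2 ys2.
Proof.
elim: xs1 ys1 => [|x xs IH] [|y ys] //=; first by rewrite om_mul1.
move=> [eq_size]; by rewrite !wordval_cons IH // om_mulA.
Qed.

Definition padded (M : ordMonoid) (n : nat) (s : seq M) : n.-tuple M :=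
  [tuple nth om_one s i | i < n].

Lemma word_fun_padded (M : ordMonoid) (I : {set M}) (n : nat) (xs ys : seq M) :
  size xs = size ys -> size xs <= n ->
  word_fun I (padded n xs) (padded n ys) = (wordval xs ys \in I).
Proof.
move=> eq_size size_le; rewrite /word_fun; congr (_ \in I).
elim: n xs ys eq_size size_le => [|n IH] [|x xs] [|y ys] //=.
- by rewrite big_ord0.
- move=> _ _; apply: (big_rec (fun w => w = om_one)) => // i w _ ->.
  by rewrite !tnth_mktuple !nth_nil !om_mul1.
move=> [eq_size] size_le; rewrite big_ord_recl !tnth_mktuple /= wordval_cons.
congr (_ ** _).
by rewrite -(IH xs ys) //; apply: eq_bigr => i _; rewrite !tnth_mktuple.
Qed.

Definition opt_letter (M : ordMonoid) (b : bool) (x : M) : M := if b then x else om_one.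

(* Monotonicity under division: an instance of the word problem for N is
   an instance for M, obtained by lifting each letter to a preimage in the
   submonoid S and pulling the order ideal back to the down-closure in M of
   its preimage. *)
Lemma N1M_division (N M : ordMonoid) (n : nat) : divides N M -> N1M N n <= N1M M n.
Proof.
move=> [S [phi [[S1 S_mul] phi1 phi_mul phi_le phi_onto]]].
apply/bigmax_leqP => I idealI.
pose J := [set z : M | [exists y in S, (phi y \in I) && om_le z y]].
have idealJ : order_ideal J.
  apply/forallP => x; apply/forallP => y; apply/implyP; rewrite !inE.
  case/andP => /existsP [z /andP [zS /andP [zI yz]]] xy.
  by apply/existsP; exists z; rewrite zS zI (om_le_trans xy yz).
have memJ z : z \in S -> (z \in J) = (phi z \in I).
  move=> zS; rewrite inE; apply/existsP/idP => [[y /andP [yS /andP [yI zy]]]|zI].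
    by have /forallP /(_ (phi z)) /forallP /(_ (phi y)) := idealI;
       rewrite yI phi_le.
  by exists z; rewrite zS zI om_le_refl.
pose lift (z : N) := odflt om_one [pick x in S | phi x == z].
have liftP z : lift z \in S /\ phi (lift z) = z.
  rewrite /lift; case: pickP => [x /andP [xS /eqP] //|none].
  by have [x xS /eqP phix] := phi_onto z; have := none x; rewrite xS phix.
pose lift_tuple (t : n.-tuple N) := map_tuple lift t.
have reduce x y : word_fun I x y = word_fun J (lift_tuple x) (lift_tuple y).
  rewrite /word_fun.
  set w := \big[om_mul/om_one]_(i < n) (tnth (lift_tuple x) i ** tnth (lift_tuple y) i).
  have [wS <-] : w \in S /\ phi w = \big[om_mul/om_one]_(i < n) (tnth x i ** tnth y i).
    apply: (big_ind2 (fun w z => w \in S /\ phi w = z))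
      => [//|w1 z1 w2 z2 [w1S <-] [w2S <-]|i _].
      by rewrite S_mul // phi_mul.
    rewrite !tnth_map; have [xS xE] := liftP (tnth x i); have [yS yE] := liftP (tnth y i).
    by rewrite S_mul // phi_mul // xE yE.
  by rewrite memJ.
apply: leq_trans (leq_bigmax_cond _ idealJ).
by apply: leq_up_log; apply: cover_number_reduction.
Qed.

Lemma omega_of (g : nat -> nat) (D : nat) :
  0 < D -> (forall n, n.-1 %/ D <= g n) -> OmegaN g.
Proof.
move=> D_gt0 g_ge; exists (2 * D); split; first by rewrite muln_gt0 D_gt0.
exists D.+1 => n n_gt; have n_gt0 : 0 < n by apply: leq_trans n_gt.
have j_gt0 : 0 < n.-1 %/ D by rewrite divn_gt0 // -ltnS prednK.
apply: (@leq_trans ((n.-1 %/ D).+1 * D)).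
  by rewrite -{1}(prednK n_gt0) ltn_ceil.
rewrite mulnC [2 * D]mulnC -mulnA leq_mul2l; apply/orP; right.
apply: (@leq_trans (2 * (n.-1 %/ D))); first by rewrite mul2n -addnn -addn1 leq_add2l.
by rewrite leq_mul2l g_ge orbT.
Qed.

(* 9^j <= 4^j * c forces 2^j <= c, since otherwise 9^j <= 4^j * c < 8^j. *)
Lemma exp2_le_of_disj_bound (j c : nat) : 3 ^ (2 * j) <= 2 ^ (2 * j) * c -> 2 ^ j <= c.
Proof.
rewrite !expnM /= => bound; rewrite leqNgt; apply/negP => c_small.
have : 4 ^ j * c < 8 ^ j by rewrite -[8]/(4 * 2) expnMn ltn_pmul2l ?expn_gt0.
have le89 : 8 ^ j <= 9 ^ j by elim: j {bound c_small} => // j IH; rewrite !expnS leq_mul.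
by rewrite ltnNge (leq_trans le89 bound).
Qed.

Lemma OmegaN_mono (g g' : nat -> nat) : (forall n, g n <= g' n) -> OmegaN g -> OmegaN g'.
Proof.
move=> le_gg' [k [k_gt0 [n0 g_ge]]]; exists k; split => //; exists n0 => n /g_ge.
by move/leq_trans; apply; rewrite leq_mul2l le_gg' orbT.
Qed.

Section SyntacticCase.

Variable L : seq bool -> bool.

Lemma synle_trans x y z : synle L x y -> synle L y z -> synle L x z.
Proof. by move=> xy yz u v /yz /xy. Qed.

Lemma synle_cat x x' y y' : synle L x x' -> synle L y y' -> synle L (x ++ y) (x' ++ y').
Proof.
move=> xx' yy' u v; rewrite -!catA => h.
by have := yy' (u ++ x') v; rewrite -!catA => /(_ h) /(xx' u (y ++ v)).
Qed.

Lemma syneq_trans x y z : syneq L x y -> syneq L y z -> syneq L x z.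
Proof. by move=> [xy yx] [yz zy]; split; apply: synle_trans; eauto. Qed.

Lemma syneq_cat x x' y y' : syneq L x x' -> syneq L y y' -> syneq L (x ++ y) (x' ++ y').
Proof. by move=> [xx' x'x] [yy' y'y]; split; apply: synle_cat. Qed.

Lemma syneq_mem x y : syneq L x y -> L x = L y.
Proof.
move=> [xy yx]; have := xy [::] [::]; have := yx [::] [::].
by rewrite /= !cats0 => xy' yx'; apply/idP/idP.
Qed.

Lemma syn_divides_words (M : ordMonoid) (u v : bool -> seq bool) :
  syn_divides L M ->
  exists (I : {set M}) (xu xv : bool -> M), order_ideal I /\
    forall ps : seq (bool * bool),
      (wordval [seq xu st.1 | st <- ps] [seq xv st.2 | st <- ps] \in I) =
      L (flatten [seq u st.1 ++ v st.2 | st <- ps]).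
Proof.
move=> [S [rep [[S1 S_mul] rep1 rep_mul rep_le rep_onto]]].
have lift (g : bool -> seq bool) :
    exists xg : bool -> M, forall b, xg b \in S /\ syneq L (rep (xg b)) (g b).
  have [x1 x1S x1E] := rep_onto (g true); have [x0 x0S x0E] := rep_onto (g false).
  by exists (fun b => if b then x1 else x0); case.
have [xu xuP] := lift u; have [xv xvP] := lift v.
pose I := [set z : M | [exists y in S, L (rep y) && om_le z y]].
exists I, xu, xv; split.
  apply/forallP => x; apply/forallP => y; apply/implyP; rewrite !inE.
  case/andP => /existsP [z /andP [zS /andP [zL yz]]] xy.
  by apply/existsP; exists z; rewrite zS zL (om_le_trans xy yz).
have memI z : z \in S -> (z \in I) = L (rep z).
  move=> zS; rewrite inE; apply/existsP/idP => [[y /andP [yS /andP [yL zy]]]|zL].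
    by have := rep_le _ _ zS yS zy [::] [::]; rewrite /= !cats0; apply.
  by exists z; rewrite zS zL om_le_refl.
(* Invariant: the value of the word lies in S and represents the word. *)
move=> ps; set w := wordval _ _.
suff [wS wE] : w \in S /\ syneq L (rep w) (flatten [seq u st.1 ++ v st.2 | st <- ps]).
  by rewrite memI // (syneq_mem wE).
rewrite {}/w; elim: ps => [|[s t] ps [wS wE]] //=; rewrite wordval_cons.
have [xuS xuE] := xuP s; have [xvS xvE] := xvP t; have xuvS := S_mul _ _ xuS xvS.
split; first exact: S_mul.
apply: syneq_trans (rep_mul _ _ xuvS wS) _; apply: syneq_cat wE.
exact: syneq_trans (rep_mul _ _ xuS xvS) (syneq_cat xuE xvE).
Qed.

Lemma syntactic_fooling_lb (M : ordMonoid) (R : bool -> bool -> bool)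
    (u v : bool -> seq bool) (sig : bool -> bool) :
  syn_divides L M ->
  (forall ps : seq (bool * bool),
     L (flatten [seq u st.1 ++ v st.2 | st <- ps]) = all (fun st => R st.1 st.2) ps) ->
  (forall s, R s (sig s)) ->
  (forall s s', R s (sig s') -> R s' (sig s) -> s = s') ->
  OmegaN (N1M M).
Proof.
move=> Mdiv L_blocks R_diag R_fool; apply: (omega_of (D := 1)) => // n.
rewrite divn1; apply: leq_trans (leq_pred n) _.
have [I [xu [xv [idealI memI]]]] := syn_divides_words u v Mdiv.
pose al (a : {ffun 'I_n -> bool}) := padded n [seq xu (a k) | k <- enum 'I_n].
pose be (b : {ffun 'I_n -> bool}) := padded n [seq xv (sig (b k)) | k <- enum 'I_n].
have size_n (T : Type) (g : 'I_n -> T) : size [seq g k | k <- enum 'I_n] = n.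
  by rewrite size_map size_enum_ord.
have word_R a b : word_fun I (al a) (be b) = all (fun k => R (a k) (sig (b k))) (enum 'I_n).
  rewrite word_fun_padded ?size_n //.
  pose ps := [seq (a k, sig (b k)) | k <- enum 'I_n].
  have -> : [seq xu (a k) | k <- enum 'I_n] = [seq xu st.1 | st <- ps] by rewrite /ps -map_comp.
  have -> : [seq xv (sig (b k)) | k <- enum 'I_n] = [seq xv st.2 | st <- ps]
    by rewrite /ps -map_comp.
  by rewrite memI L_blocks all_map.
apply: (N1M_ge idealI).
have := fooling_set_lb (f := word_fun I (n := n)) (al := al) (be := be).
rewrite card_ffun card_bool card_ord; apply => [a|a b]; rewrite !word_R.
  by apply/allP => k _.
move=> /allP ab /allP ba; apply/ffunP => k.
by apply: R_fool; [apply: ab | apply: ba]; rewrite mem_enum.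
Qed.

End SyntacticCase.

(* BA_2^+: Alice writes a (s = 1) or ab (s = 0), Bob writes b (t = 1) or
   ab (t = 0); the word is in (ab)^* iff s = t at every position, so the
   inputs (a, a) form a fooling set. *)
Lemma BA2_lb (M : ordMonoid) : BA2p_divides M -> OmegaN (N1M M).
Proof.
move=> Mdiv; apply: (@syntactic_fooling_lb abstar M (fun s t => s == t)
   (fun s => if s then [:: true] else [:: true; false])
   (fun t => if t then [:: false] else [:: true; false]) id Mdiv) => [|//|s s' /eqP //].
by elim => [|[[] []] ps IH].
Qed.

(* U^+: Alice writes b s, Bob writes t b (a letter bit being a when on);
   the word avoids aa iff s and t are never both on, a disjointness test
   whose fooling set is (a, complement of a). *)
Lemma Up_lb (M : ordMonoid) : Up_divides M -> OmegaN (N1M M).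
Proof.
move=> Mdiv; apply: (@syntactic_fooling_lb noaa M (fun s t => ~~ (s && t))
   (fun s => [:: false; s]) (fun t => [:: t; false]) negb Mdiv) => [|[]|[] []] //.
elim => [|[s t] ps IH] //=; rewrite /noaa in IH *; rewrite -IH.
by case: s; case: t => //=; case: (flatten _) => //= [] [].
Qed.

Section Orbits.

Variable M : ordMonoid.
Implicit Types (x h : M) (a b c d r : nat).

Lemma mpowD x a b : mpow x (a + b) = mpow x a ** mpow x b.
Proof. by elim: a => [|a IH]; rewrite ?om_mul1 //= IH om_mulA. Qed.

Lemma mpow_comm x a : mpow x a ** x = x ** mpow x a.
Proof. by elim: a => [|a IH] /=; rewrite ?om_mul1 ?om_mulr1 // -om_mulA IH. Qed.

Definition orb h (e0 : M) r := mpow h r ** e0.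

Lemma orb0 h (e0 : M) : orb h e0 0 = e0.
Proof. exact: om_mul1. Qed.

Lemma orb_shift h (e0 : M) a b : mpow h a ** orb h e0 b = orb h e0 (a + b).
Proof. by rewrite /orb mpowD om_mulA. Qed.

Definition exact_period h (e0 : M) q :=
  [/\ 0 < q, orb h e0 q = e0 & forall r, 0 < r -> ~~ (q %| r) -> orb h e0 r <> e0].

Lemma orb_periodic h (e0 : M) q :
  orb h e0 q = e0 -> forall r k, orb h e0 (r + q * k) = orb h e0 r.
Proof.
move=> orbq r k; rewrite /orb mpowD -om_mulA; congr (_ ** _).
elim: k => [|k IH]; first by rewrite muln0 om_mul1.
by rewrite mulnS mpowD -om_mulA IH.
Qed.

Lemma orb_mod h (e0 : M) q : orb h e0 q = e0 -> forall r, orb h e0 r = orb h e0 (r %% q).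
Proof. by move=> orbq r; rewrite {1}(divn_eq r q) addnC mulnC orb_periodic. Qed.

(* Comparable points of a periodic orbit are equal: if h^d y <= y then
   multiplying by powers of h gives y = h^(qd) y <= h^d y. *)
Lemma orb_le_eq h (e0 : M) q : 0 < q -> orb h e0 q = e0 ->
  forall a c, om_le (orb h e0 a) (orb h e0 c) -> orb h e0 a = orb h e0 c.
Proof.
move=> q_gt0 orbq a c ac; set d := a + c * q.-1.
have def_a : orb h e0 (d + c) = orb h e0 a.
  by rewrite /d -addnA -{2}(muln1 c) -mulnDr addn1 prednK // mulnC orb_periodic.
have base : om_le (orb h e0 (d + c)) (orb h e0 c) by rewrite def_a.
have step k : om_le (orb h e0 (k.+1 * d + c)) (orb h e0 (k * d + c)).
  by have := om_le_mull (mpow h (k * d)) base; rewrite !orb_shift mulSn addnCA addnA.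
have chain k : om_le (orb h e0 (k.+1 * d + c)) (orb h e0 (d + c)).
  elim: k => [|k IH]; first by rewrite mul1n om_le_refl.
  exact: om_le_trans (step k.+1) IH.
apply: om_le_anti; rewrite ac /=; have := chain q.-1.
by rewrite prednK // addnC orb_periodic // def_a.
Qed.

Lemma orb_eq_mod h (e0 : M) q : exact_period h e0 q ->
  forall a c, orb h e0 a = orb h e0 c -> a = c %[mod q].
Proof.
move=> [q_gt0 orbq orb_ne] a c ac.
have back : orb h e0 (c * q.-1 + a) = e0.
  rewrite -orb_shift ac orb_shift -{2}(muln1 c) -mulnDr addn1 prednK //.
  by rewrite -(add0n (c * q)) mulnC orb_periodic // orb0.
have q_dvd : q %| c * q.-1 + a.
  have [->|pos] := posnP (c * q.-1 + a); first exact: dvdn0.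
  by apply/negPn/negP => /(orb_ne _ pos).
have : (c * q.-1 + a + c) %% q = c %% q by rewrite -modnDml (eqP q_dvd).
by rewrite addnAC -{2}(muln1 c) -mulnDr addn1 prednK // modnMDl.
Qed.

Lemma orb_le_mod h (e0 : M) q : exact_period h e0 q ->
  forall a c, om_le (orb h e0 a) (orb h e0 c) = (a == c %[mod q]).
Proof.
move=> per a c; have [q_gt0 orbq _] := per; apply/idP/eqP.
  by move/(orb_le_eq q_gt0 orbq); apply: orb_eq_mod.
by move=> ac; rewrite (orb_mod orbq a) ac -orb_mod // om_le_refl.
Qed.

End Orbits.

Definition bitword (M : ordMonoid) (x0 : M) (g : bool -> seq M) (m : nat)
    (a : {ffun 'I_m -> bool}) : seq M :=
  x0 :: flatten [seq g (a k) | k <- enum 'I_m].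

Lemma size_bitword (M : ordMonoid) (x0 : M) (g : bool -> seq M) (L m : nat) a :
  (forall b, size (g b) = L) -> size (@bitword M x0 g m a) = (L * m).+1.
Proof.
move=> size_g; rewrite /= size_flatten /shape -map_comp sumnE big_map big_enum /=.
by rewrite (eq_bigr (fun _ => L)) // sum_nat_const card_ord mulnC.
Qed.

(* If the value of the block word for (a, b) decides whether |a /\ b| is
   divisible by a prime p, the word problem of M has linear complexity: on
   inputs of length n there are about n / (2L) bit positions available. *)
Lemma intersection_mod_word_lb (M : ordMonoid) (p L : nat) (x0 y0 : M)
    (gA gB : bool -> seq M) :
  prime p -> 0 < L -> (forall s, size (gA s) = L) -> (forall t, size (gB t) = L) ->
  (forall m, exists2 I : {set M}, order_ideal I &
     forall a b : {ffun 'I_m -> bool},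
       (wordval (bitword x0 gA a) (bitword y0 gB b) \in I) =
       (p %| \sum_(k < m) (a k && b k))) ->
  forall n, n.-1 %/ (2 * L) <= N1M M n.
Proof.
move=> p_prime L_gt0 size_gA size_gB word_mod [|n]; first by rewrite div0n.
set j := n.+1.-1 %/ (2 * L); have [I idealI memI] := word_mod (2 * j).
have size_le : (L * (2 * j)).+1 <= n.+1.
  by rewrite ltnS mulnA (mulnC L) mulnC; apply: leq_divM.
pose al (a : {ffun 'I_(2 * j) -> bool}) := padded n.+1 (bitword x0 gA a).
pose be (b : {ffun 'I_(2 * j) -> bool}) := padded n.+1 (bitword y0 gB b).
have wordE a b : word_fun I (al a) (be b) = (p %| \sum_(k < 2 * j) (a k && b k)).
  by rewrite word_fun_padded ?memI ?(size_bitword _ _ size_gA) ?(size_bitword _ _ size_gB).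
apply: (N1M_ge idealI); apply: exp2_le_of_disj_bound.
apply: (disjointness_mod_lb (al := al) (be := be) p_prime) => a b; rewrite wordE //.
move=> /forallP disj; rewrite big1 ?dvdn0 // => k _.
by have := disj k; case: (a k && b k).
Qed.

Section Gadgets.

Variables (M : ordMonoid) (h e0 : M).

Definition advances (gA gB : bool -> seq M) (E : bool -> bool -> nat) :=
  forall r s t, orb h e0 r ** wordval (gA s) (gB t) = orb h e0 (r + E s t).

Variables (gA gB : bool -> seq M) (E : bool -> bool -> nat) (L : nat).
Hypotheses (size_gA : forall s, size (gA s) = L) (size_gB : forall t, size (gB t) = L).
Hypothesis gadget : advances gA gB E.

Lemma advances_blocks (I : Type) (ks : seq I) (sA sB : I -> bool) r :
  orb h e0 r ** wordval (flatten [seq gA (sA k) | k <- ks])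
                        (flatten [seq gB (sB k) | k <- ks])
  = orb h e0 (r + \sum_(k <- ks) E (sA k) (sB k)).
Proof.
elim: ks r => [|k ks IH] r /=; first by rewrite big_nil addn0 om_mulr1.
by rewrite wordval_cat ?size_gA ?size_gB // om_mulA gadget IH big_cons addnA.
Qed.

Definition repeated (k : nat) (g : bool -> seq M) (b : bool) := flatten (nseq k (g b)).

Lemma size_repeated (k : nat) (g : bool -> seq M) (b : bool) :
  size (g b) = L -> size (repeated k g b) = k * L.
Proof. by move=> size_g; elim: k => //= k IH; rewrite size_cat IH size_g mulSn. Qed.

Lemma advances_repeated (k : nat) :
  advances (repeated k gA) (repeated k gB) (fun s t => k * E s t).
Proof.
move=> r s t; have := advances_blocks (nseq k tt) (fun=> s) (fun=> t) r.
by rewrite !map_nseq big_nseq iter_addn_0 mulnC.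
Qed.

End Gadgets.

Lemma sum_congr_mod (I : Type) (r : seq I) (P : pred I) (F G : I -> nat) (q : nat) :
  (forall i, F i = G i %[mod q]) ->
  \sum_(i <- r | P i) F i = \sum_(i <- r | P i) G i %[mod q].
Proof. by move=> FG; rewrite -modn_summ -[RHS]modn_summ (eq_bigr _ (fun i _ => FG i)). Qed.

Lemma congr_shift_dvd (q p lam T S C : nat) : q = lam * p -> 0 < lam ->
  T + lam * S = C %[mod q] -> (T == C %[mod q]) = (p %| S).
Proof.
move=> def_q lam_gt0 TS; rewrite -(eqn_modDr (lam * S)) TS -{1}[C]addn0 eqn_modDl.
by rewrite mod0n eq_sym -/(dvdn q _) def_q dvdn_pmul2l.
Qed.

(* With p a prime factor of q and q = lam * p, lam repetitions of the
   gadget per bit position advance the orbit by lam * (c - (s && t)), so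
   the word value lies below the point lam * c * m exactly when p divides
   |a /\ b|. *)
Lemma counter_lb (M : ordMonoid) (h e0 : M) (q L c : nat) (gA gB : bool -> seq M)
    (E : bool -> bool -> nat) :
  exact_period h e0 q -> 1 < q -> 0 < L ->
  (forall s, size (gA s) = L) -> (forall t, size (gB t) = L) ->
  advances h e0 gA gB E -> (forall s t, E s t + (s && t) = c %[mod q]) ->
  OmegaN (N1M M).
Proof.
move=> period q_gt1 L_gt0 size_gA size_gB gadget E_mod.
have p_prime := pdiv_prime q_gt1; set p := pdiv q in p_prime.
set lam := q %/ p; have def_q : q = lam * p by rewrite divnK // pdiv_dvd.
have lam_gt0 : 0 < lam by rewrite divn_gt0 ?prime_gt0 // pdiv_leq // ltnW.
have size_rA s : size (repeated lam gA s) = lam * L := size_repeated lam (size_gA s).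
have size_rB t : size (repeated lam gB t) = lam * L := size_repeated lam (size_gB t).
apply: (omega_of (D := 2 * (lam * L))); first by rewrite !muln_gt0 lam_gt0.
apply: (intersection_mod_word_lb (x0 := e0) (y0 := om_one) p_prime _ size_rA size_rB).
  by rewrite muln_gt0 lam_gt0.
move=> m.
exists [set z | om_le z (orb h e0 (m * (lam * c)))] => [|a b].
  apply/forallP => x; apply/forallP => y; apply/implyP; rewrite !inE.
  by case/andP => yI xy; apply: om_le_trans yI.
rewrite /bitword wordval_cons om_mulr1 -{1}(orb0 h e0).
rewrite (advances_blocks size_rA size_rB (advances_repeated size_gA size_gB gadget lam)).
rewrite add0n inE (orb_le_mod period) big_enum /=; apply: congr_shift_dvd def_q lam_gt0 _.
have -> : m * (lam * c) = \sum_(k < m) lam * c by rewrite sum_nat_const card_ord.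
rewrite big_distrr -big_split /=.
by apply: sum_congr_mod => k; rewrite -mulnDr -modnMmr E_mod modnMmr.
Qed.

Section TqGadget.

Variables (M : ordMonoid) (e f : M) (q : nat).
Hypotheses (e_idem : idem e) (f_idem : idem f).

Let h := e ** f.

Lemma orb_f_e r : orb h e r ** f ** e = orb h e r.+1.
Proof. by rewrite /orb -(om_mulA _ e f) mpow_comm. Qed.

Lemma orb_fe_pow r k : orb h e r ** mpow (f ** e) k = orb h e (r + k).
Proof.
elim: k r => [|k IH] r; first by rewrite om_mulr1 addn0.
by rewrite /= !om_mulA orb_f_e IH addSnnS.
Qed.

Lemma opt_letter_e_mul x s t :
  x ** opt_letter s e ** opt_letter t e = x ** opt_letter (s || t) e.
Proof. by case: s; case: t; rewrite /= ?om_mulr1 // -om_mulA e_idem. Qed.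

(* The core of the gadget: f (e if b) f e advances by 1 + b, since the
   factor f f collapses when b is off. *)
Lemma orb_f_opt_e_f_e r b :
  orb h e r ** f ** opt_letter b e ** f ** e = orb h e (r + 1 + b).
Proof.
case: b => /=; first by rewrite !orb_f_e !addn1.
by rewrite om_mulr1 -(om_mulA _ f f) f_idem orb_f_e addn1 addn0.
Qed.

(* Alice's letter (fe)^((q-1)s) f (e if s), Bob's letter
   (e if t) fe (fe)^((q-1)t): together they advance the orbit by
   (q-1)s + 1 + (s or t) + (q-1)t = 1 - (s and t) modulo q. *)
Definition Tq_alice (s : bool) : M :=
  mpow (f ** e) (q.-1 * s) ** (f ** opt_letter s e).
Definition Tq_bob (t : bool) : M :=
  (opt_letter t e ** (f ** e)) ** mpow (f ** e) (q.-1 * t).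

Lemma Tq_gadget :
  advances h e (fun s => [:: Tq_alice s]) (fun t => [:: Tq_bob t])
    (fun s t => q.-1 * s + 1 + (s || t) + q.-1 * t).
Proof.
move=> r s t; rewrite wordval_cons om_mulr1 /Tq_alice /Tq_bob !om_mulA.
by rewrite orb_fe_pow opt_letter_e_mul orb_f_opt_e_f_e orb_fe_pow !addnA.
Qed.

End TqGadget.

Lemma Tq_lb (M : ordMonoid) (q : nat) : 1 < q -> Tq M q -> OmegaN (N1M M).
Proof.
move=> q_gt1 [e [f [e_idem [f_idem [orbq orb_ne]]]]].
have period : exact_period (e ** f) e q by split => //; apply: ltnW.
apply: (counter_lb period q_gt1 (L := 1) (c := 1) _ _ _ (Tq_gadget q e_idem f_idem)) => //.
move=> s t; suff -> : q.-1 * s + 1 + (s || t) + q.-1 * t + (s && t) = (s + t) * q + 1.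
  by rewrite modnMDl.
by case: q q_gt1 {period orbq orb_ne} => // q' _; case: s; case: t => /=; lia.
Qed.

Section GroupCase.

Variable N : ordMonoid.
Implicit Types (x y c : N).

Lemma mpow_one_mul c q : mpow c q = om_one -> forall k, mpow c (k * q) = om_one.
Proof. by move=> cq; elim=> [|k IH] //; rewrite mulSn mpowD cq IH om_mul1. Qed.

(* An invertible element has finite order: two of c^0, ..., c^#|N| agree,
   and cancelling the smaller power leaves a positive power equal to 1. *)
Lemma invertible_pow_one c' c : c' ** c = om_one -> exists2 r, 0 < r & mpow c r = om_one.
Proof.
move=> c'c; have cancel i : mpow c' i ** mpow c i = om_one.
  elim: i => [|i IH] /=; first by rewrite om_mul1.
  by rewrite -(mpow_comm c i) om_mulA -(om_mulA c') IH om_mulr1.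
have [i [j [ij eq_ij]]] : exists i j, i < j /\ mpow c i = mpow c j.
  pose pw (i : 'I_#|N|.+1) := mpow c i.
  have /injectivePn [i [j /negP ij eq_ij]] : ~~ injectiveb pw.
    by apply/injectiveP => /leq_card; rewrite card_ord ltnn.
  have [lt_ij|lt_ji|/val_inj eq_ij'] := ltngtP i j; first by exists i, j.
    by exists j, i; split; last exact: esym eq_ij.
  by move: ij; rewrite eq_ij' eqxx.
exists (j - i); first by rewrite subn_gt0.
have : mpow c i = mpow c i ** mpow c (j - i) by rewrite -mpowD subnKC // ltnW.
by move=> /(congr1 (om_mul (mpow c' i))); rewrite om_mulA cancel om_mul1 => <-.
Qed.

Lemma invertible_period c' c : c' ** c = om_one -> c <> om_one ->
  exists2 q, 1 < q & exact_period c om_one q.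
Proof.
move=> c'c c_ne1; have [r r_gt0 cr] := invertible_pow_one c'c.
have ex_q : exists r, (0 < r) && (mpow c r == om_one) by exists r; rewrite r_gt0 cr eqxx.
case: (ex_minnP ex_q) => q /andP [q_gt0 /eqP cq] q_min.
have orbE k : orb c om_one k = mpow c k by apply: om_mulr1.
exists q; [|split => // [|k k_gt0 ndvd]]; rewrite ?orbE //.
  by case: q q_gt0 cq {q_min} => [|[|]] //; rewrite /= om_mulr1.
move=> ck; have : q <= k %% q.
  apply: q_min; rewrite lt0n -/(dvdn q k) ndvd /=.
  by move: ck; rewrite {1}(divn_eq k q) mpowD mpow_one_mul // om_mul1 => ->.
by rewrite leqNgt ltn_pmod.
Qed.

Lemma commutator_ne_one x x' y y' :
  x' ** x = om_one -> y' ** y = om_one -> x ** y <> y ** x ->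
  wordval [:: x; x'] [:: y; y'] <> om_one.
Proof.
move=> x'x y'y ne_xy; rewrite !wordval_cons om_mulr1 => comm1; apply: ne_xy.
have -> : y ** x = (x ** y) ** (x' ** y') ** (y ** x) by rewrite comm1 om_mul1.
by rewrite -!om_mulA (om_mulA y' y) y'y om_mul1 x'x om_mulr1.
Qed.

Lemma commutator_gadget x x' y y' : x ** x' = om_one -> y ** y' = om_one ->
  advances (wordval [:: x; x'] [:: y; y']) om_one
    (fun s => [:: opt_letter s x; opt_letter s x'])
    (fun t => [:: opt_letter t y; opt_letter t y']) (fun s t => s && t).
Proof.
move=> xx' yy' r s t; rewrite /orb !om_mulr1.
case: s; case: t; rewrite /= !wordval_cons !om_mulr1 ?om_mul1 ?xx' ?yy' ?om_mulr1 ?addn0 //.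
by rewrite addn1 mpow_comm.
Qed.

(* A non-commutative group: the commutator c of two non-commuting elements
   has order q > 1, and q - 1 copies of the commutator gadget advance the
   orbit of 1 under c by (q - 1)(s and t) = -(s and t) modulo q. *)
Lemma noncomm_group_lb : is_group N -> noncomm N -> OmegaN (N1M N).
Proof.
move=> group [x [y ne_xy]].
have [x' [xx' x'x]] := group x; have [y' [yy' y'y]] := group y.
set c := wordval [:: x; x'] [:: y; y'].
have [c' [_ c'c]] := group c.
have [q q_gt1 period] := invertible_period c'c (commutator_ne_one x'x y'y ne_xy).
have size_block (z z' : N) (b : bool) : size [:: opt_letter b z; opt_letter b z'] = 2 by [].
have size_blocks (z z' : N) (b : bool) :
    size (repeated q.-1 (fun b => [:: opt_letter b z; opt_letter b z']) b) = q.-1 * 2.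
  exact: size_repeated (size_block z z' b).
apply: (counter_lb period q_gt1 (c := 0) _ (size_blocks x x') (size_blocks y y')
  (advances_repeated (size_block x x') (size_block y y') (commutator_gadget xx' yy') q.-1)).
- by rewrite muln_gt0 -subn1 subn_gt0 q_gt1.
by move=> s t; rewrite addnC -mulSn prednK ?(ltnW q_gt1) // modnMr mod0n.
Qed.

End GroupCase.

Theorem mainTheorem14 (M : ordMonoid) :
  ((exists q, 1 < q /\ Tq M q) \/ BA2p_divides M \/ Up_divides M \/
   (exists N : ordMonoid, [/\ is_group N, noncomm N & divides N M])) ->
  OmegaN (N1M M).
Proof.
case=> [[q [q_gt1 TqM]] | [BA2M | [UpM | [N [group ncomm NdivM]]]]].
- exact: Tq_lb q_gt1 TqM.
- exact: BA2_lb.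
- exact: Up_lb.
- exact: OmegaN_mono (fun n => N1M_division n NdivM) (noncomm_group_lb group ncomm).
Qed.
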